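(* Let $\varepsilon=1+\sqrt2$, $K=\mathbb Q(\sqrt2)$ with nontrivial automorphism $\sigma$, $N(z)=z\sigma(z)$, $$\Gamma=\Gamma(2,5)=\left\{\gamma=\begin{pmatrix}x_0+x_1\sqrt2&\sqrt5(x_2+x_3\sqrt2)\\ \sqrt5(x_2-x_3\sqrt2)&x_0-x_1\sqrt2\end{pmatrix}\in\mathrm{SL}_2(\mathbb R):\ x_i\in\mathbb Z\right\},$$ $h_0=\begin{pmatrix}\varepsilon^2&0\\0&\varepsilon^{-2}\end{pmatrix}$, and $z_1(\gamma)=x_0+x_1\sqrt2$, $z_2(\gamma)=x_2+x_3\sqrt2$. Then: (1) $\gamma\mapsto(z_1(\gamma),z_2(\gamma))$ is injective; (2) if $\gamma\in\Gamma\setminus S$, then $N(z_1(\gamma))$ and $N(z_2(\gamma))$ are non-zero and have the same sign; writing $N(z_1(\gamma))=5N(z_2(\gamma))+1=5n+1$: (a) if $\delta_1(\gamma)+\delta_2(\gamma)$ is even then $n\in\mathbb N$ and $\delta(\gamma)=20n+2$; (b) if $\delta_1(\gamma)+\delta_2(\gamma)$ is odd then $n\in-\mathbb N$ and $\delta(\gamma)=-20n-2$; (3) if $\gamma'=h_0^{j_1}\gamma h_0^{j_2}$ then $z_1(\gamma')=\varepsilon^{2(j_1+j_2)}z_1(\gamma)$ and $z_2(\gamma')=\varepsilon^{2(j_1-j_2)}z_2(\gamma)$; (4) for $\gamma\in\Gamma\setminus S$, $e\!\left(\frac{\log y_1(\gamma)}{\log\varepsilon^4}\right)=\lambda(z_1(\gamma))\lambda(z_2(\gamma))$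 and $e\!\left(\frac{\log y_2(\gamma)}{\log\varepsilon^4}\right)=\lambda(z_1(\gamma))/\lambda(z_2(\gamma))$.
   Context: For $g=\begin{pmatrix}a&b\\c&d\end{pmatrix}\in\mathrm{SL}_2(\mathbb R)$: $s=\{abcd=0\}$, $S=s\cup\{g: g(iy_1)=iy_2\text{ for some }y_1,y_2>0\}$; $\delta(g)=2|ad+bc|$. For $g\notin S$: $y_1(g)=|ab/(cd)|^{1/2}$, $y_2(g)=|ac/(bd)|^{1/2}$, and $(\delta_1(g),\delta_2(g))\in\{0,1\}^2$ is $(0,0),(1,1),(1,0),(0,1)$ according as the sign pattern of $(a,b,c,d)$ is $\pm(+,+,+,+)$, $\pm(+,-,-,+)$, $\pm(+,+,-,-)$, $\pm(+,-,+,-)$. $e(t)=e^{2\pi it}$, and for $z\in K$ with $z\sigma(z)\ne0$, $\lambda(z)=\left|\frac{z}{\sigma z}\right|^{\frac{\pi i}{4\log\varepsilon}}=\exp\!\left(\frac{\pi i}{4\log\varepsilon}\log\left|\frac{z}{\sigma z}\right|\right)$. *)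

From Stdlib Require Import Reals ZArith QArith Qreals ClassicalEpsilon.
From Coquelicot Require Import Coquelicot.
Open Scope R_scope.

Definition eps : R := 1 + sqrt 2.

Definition inK (z : R) : Prop :=
  exists pq : Q * Q, z = Q2R (fst pq) + Q2R (snd pq) * sqrt 2.

(* the nontrivial automorphism sigma of K (value 0 outside K, never used there) *)
Definition sigma (z : R) : R :=
  match excluded_middle_informative (inK z) with
  | left H =>
      let pq := proj1_sig (constructive_indefinite_description _ H) in
      Q2R (fst pq) - Q2R (snd pq) * sqrt 2
  | right _ => 0
  end.

Definition Nm (z : R) : R := z * sigma z.

Record mat := Mat { ma : R; mb : R; mc : R; md : R }.

Definition det (g : mat) : R := ma g * md g - mb g * mc g.
Definition mmul (g h : mat) : mat :=
  Mat (ma g * ma h + mb g * mc h) (ma g * mb h + mb g * md h)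
      (mc g * ma h + md g * mc h) (mc g * mb h + md g * md h).
Definition mid : mat := Mat 1 0 0 1.
(* inverse of a determinant-one matrix *)
Definition minv (g : mat) : mat := Mat (md g) (- mb g) (- mc g) (ma g).
Fixpoint mpow (g : mat) (n : nat) : mat :=
  match n with O => mid | S k => mmul g (mpow g k) end.
Definition mpowZ (g : mat) (j : Z) : mat :=
  match j with
  | Z0 => mid
  | Zpos p => mpow g (Pos.to_nat p)
  | Zneg p => mpow (minv g) (Pos.to_nat p)
  end.

Definition h0 : mat := Mat (eps ^ 2) 0 0 (/ eps ^ 2).

Definition inGamma (g : mat) : Prop :=
  det g = 1 /\
  exists x0 x1 x2 x3 : Z,
    ma g = IZR x0 + IZR x1 * sqrt 2 /\
    mb g = sqrt 5 * (IZR x2 + IZR x3 * sqrt 2) /\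
    mc g = sqrt 5 * (IZR x2 - IZR x3 * sqrt 2) /\
    md g = IZR x0 - IZR x1 * sqrt 2.

Definition z1 (g : mat) : R := ma g.
Definition z2 (g : mat) : R := mb g / sqrt 5.

Definition mobius (g : mat) (z : C) : C :=
  Cdiv (Cplus (Cmult (RtoC (ma g)) z) (RtoC (mb g)))
       (Cplus (Cmult (RtoC (mc g)) z) (RtoC (md g))).

Definition in_s (g : mat) : Prop := ma g * mb g * mc g * md g = 0.
Definition in_S (g : mat) : Prop :=
  in_s g \/
  exists y1 y2 : R, 0 < y1 /\ 0 < y2 /\ mobius g (0, y1) = (0, y2).

Definition delta (g : mat) : R := 2 * Rabs (ma g * md g + mb g * mc g).

Definition y1 (g : mat) : R :=
  sqrt (Rabs (ma g * mb g / (mc g * md g))).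
Definition y2 (g : mat) : R :=
  sqrt (Rabs (ma g * mc g / (mb g * md g))).

Definition posb (x : R) : bool := if Rlt_dec 0 x then true else false.

(* (delta1, delta2) from the sign pattern of (a,b,c,d); patterns not listed
   (which do not occur for g in SL2 \ S) get the default (0,0). *)
Definition delta12 (g : mat) : Z * Z :=
  match posb (ma g), posb (mb g), posb (mc g), posb (md g) with
  | true, true, true, true | false, false, false, false => (0, 0)%Z
  | true, false, false, true | false, true, true, false => (1, 1)%Z
  | true, true, false, false | false, false, true, true => (1, 0)%Z
  | true, false, true, false | false, true, false, true => (0, 1)%Z
  | _, _, _, _ => (0, 0)%Z
  end.
Definition delta1 (g : mat) : Z := fst (delta12 g).
Definition delta2 (g : mat) : Z := snd (delta12 g).

Definition cis (theta : R) : C := (cos theta, sin theta).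
Definition e (t : R) : C := cis (2 * PI * t).
(* lambda(z) = |z / sigma z|^(pi i / (4 log eps)) *)
Definition lam (z : R) : C :=
  cis (PI / (4 * ln eps) * ln (Rabs (z / sigma z))).

(* Write gamma = (a b; c d).  Since sqrt 2 is irrational, coordinates in
   Z[sqrt 2] are unique, so sigma(z1) = d and sigma(z2) = c / sqrt 5; hence
   gamma is recovered from (z1, z2), N(z1) = ad, 5 N(z2) = bc, and
   det gamma = 1 reads N(z1) = 5 N(z2) + 1.  Outside S the integer
   n = N(z2) is non-zero, so ad = 5n + 1 and bc = 5n both have the sign of n:
   this fixes the sign pattern of (a, b, c, d), and
   delta = 2 |ad + bc| = 2 |10 n + 1|.  Multiplying by the diagonal matrix h0
   scales a and b by powers of eps.  Finally y1^2 = |a/d| |b/c| and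
   y2^2 = |a/d| / |b/c|, so taking logarithms turns (4) into the
   additivity of the argument of cis. *)
From Pilot Require Import Defs.
From Stdlib Require Import Reals ZArith QArith Qreals Lia Lra Psatz.
From Coquelicot Require Import Coquelicot.
Open Scope R_scope.

Lemma even_of_even_square (n : Z) : Z.even (n * n) = true -> Z.even n = true.
Proof. rewrite Z.even_mul. now destruct (Z.even n). Qed.

Lemma square_neq_double_square (d n : Z) : d <> 0%Z -> (n * n <> 2 * (d * d))%Z.
Proof.
  remember (Z.abs_nat d) as m eqn:Hm. revert d n Hm.
  induction m as [m IH] using lt_wf_ind. intros d n -> Hd E.
  assert (Hn : Z.even n = true).
  { apply even_of_even_square. rewrite E, Z.even_mul. reflexivity. }
  apply Z.even_spec in Hn as [k ->].
  assert (Hd2 : Z.even d = true).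
  { apply even_of_even_square. replace (d * d)%Z with (2 * (k * k))%Z by lia.
    rewrite Z.even_mul. reflexivity. }
  apply Z.even_spec in Hd2 as [l ->].
  apply (IH (Z.abs_nat l)) with (d := l) (n := k); lia.
Qed.

Lemma sqrt2_irrational (r : Q) : Q2R r * Q2R r <> 2.
Proof.
  intros H. destruct r as [n d].
  assert (E : Q2R ((n # d) * (n # d)) = Q2R (2 # 1)).
  { rewrite Q2R_mult, H. unfold Q2R. simpl. field. }
  apply eqR_Qeq in E. unfold Qeq, Qmult in E. simpl in E.
  apply (square_neq_double_square (Z.pos d) n); lia.
Qed.

Lemma Q2R_sqrt2_coords_inj (p q p' q' : Q) :
  Q2R p + Q2R q * sqrt 2 = Q2R p' + Q2R q' * sqrt 2 -> Q2R p = Q2R p' /\ Q2R q = Q2R q'.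
Proof.
  intros H. destruct (Req_dec (Q2R q) (Q2R q')) as [Hq|Hq]; [rewrite Hq in H; split; lra|].
  exfalso. apply (sqrt2_irrational ((p' - p) / (q - q'))).
  assert (Hqq : ~ q - q' == 0).
  { intros E. apply Qeq_eqR in E. rewrite Q2R_minus, RMicromega.Q2R_0 in E. lra. }
  rewrite Q2R_div, !Q2R_minus by exact Hqq.
  replace ((Q2R p' - Q2R p) / (Q2R q - Q2R q')) with (sqrt 2) by (field_simplify_eq; lra).
  apply sqrt_sqrt. lra.
Qed.

Lemma sigma_Q2R (p q : Q) : Defs.sigma (Q2R p + Q2R q * sqrt 2) = Q2R p - Q2R q * sqrt 2.
Proof.
  unfold Defs.sigma. destruct (ClassicalEpsilon.excluded_middle_informative _) as [H|H].
  - destruct (ClassicalEpsilon.constructive_indefinite_description _ H) as [[p' q'] E].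
    simpl in *. apply Q2R_sqrt2_coords_inj in E as [-> ->]. reflexivity.
  - exfalso. apply H. now exists (p, q).
Qed.

Lemma IZR_Q2R (x : Z) : IZR x = Q2R (inject_Z x).
Proof. unfold Q2R, inject_Z. simpl. field. Qed.

Lemma sigma_IZR (x y : Z) : Defs.sigma (IZR x + IZR y * sqrt 2) = IZR x - IZR y * sqrt 2.
Proof. rewrite (IZR_Q2R x), (IZR_Q2R y). apply sigma_Q2R. Qed.

Lemma Nm_IZR (x y : Z) : Nm (IZR x + IZR y * sqrt 2) = IZR (x * x - 2 * (y * y)).
Proof.
  unfold Nm. rewrite sigma_IZR, minus_IZR, !mult_IZR.
  replace ((IZR x + IZR y * sqrt 2) * (IZR x - IZR y * sqrt 2))
    with (IZR x * IZR x - (sqrt 2 * sqrt 2) * (IZR y * IZR y)) by ring.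
  rewrite sqrt_sqrt by lra. reflexivity.
Qed.

Lemma sqrt5_pos : 0 < sqrt 5.
Proof. apply sqrt_lt_R0. lra. Qed.

Section Gamma.

Variable g : mat.
Hypothesis Hg : inGamma g.

Lemma z2_IZR :
  exists x2 x3 : Z, z2 g = IZR x2 + IZR x3 * sqrt 2 /\ mc g = sqrt 5 * (IZR x2 - IZR x3 * sqrt 2).
Proof.
  destruct Hg as [_ (x0 & x1 & x2 & x3 & _ & Hb & Hc & _)].
  exists x2, x3. split; [|exact Hc].
  unfold z2. rewrite Hb. field. apply Rgt_not_eq, sqrt5_pos.
Qed.

Lemma sigma_z1 : Defs.sigma (z1 g) = md g.
Proof.
  destruct Hg as [_ (x0 & x1 & x2 & x3 & Ha & _ & _ & Hd)].
  unfold z1. rewrite Ha, Hd. apply sigma_IZR.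
Qed.

Lemma sigma_z2 : Defs.sigma (z2 g) = mc g / sqrt 5.
Proof.
  destruct z2_IZR as (x2 & x3 & -> & ->). rewrite sigma_IZR.
  field. apply Rgt_not_eq, sqrt5_pos.
Qed.

Lemma Nm_z1 : Nm (z1 g) = ma g * md g.
Proof. unfold Nm. now rewrite sigma_z1. Qed.

Lemma Nm_z2 : mb g * mc g = 5 * Nm (z2 g).
Proof.
  unfold Nm. rewrite sigma_z2. unfold z2.
  rewrite <- (sqrt_sqrt 5) at 1 by lra. field. apply Rgt_not_eq, sqrt5_pos.
Qed.

Lemma Nm_z2_IZR : exists n : Z, Nm (z2 g) = IZR n.
Proof. destruct z2_IZR as (x2 & x3 & -> & _). eexists. apply Nm_IZR. Qed.

Lemma Nm_z1_eq : Nm (z1 g) = 5 * Nm (z2 g) + 1.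
Proof. destruct Hg as [Hdet _]. unfold det in Hdet. rewrite Nm_z1, <- Nm_z2. lra. Qed.

Lemma delta_Nm_z2 : delta g = 2 * Rabs (10 * Nm (z2 g) + 1).
Proof. unfold delta. rewrite <- Nm_z1, Nm_z1_eq, Nm_z2. f_equal. f_equal. ring. Qed.

End Gamma.

Lemma Gamma_z_inj (g g' : mat) : inGamma g -> inGamma g' ->
  z1 g = z1 g' -> z2 g = z2 g' -> g = g'.
Proof.
  intros Hg Hg' E1 E2. pose proof sqrt5_pos as H5.
  assert (Hinv : / sqrt 5 <> 0) by (apply Rinv_neq_0_compat; lra).
  assert (Eb : mb g = mb g') by (apply (Rmult_eq_reg_r (/ sqrt 5)); [exact E2|exact Hinv]).
  assert (Ec : mc g = mc g').
  { apply (Rmult_eq_reg_r (/ sqrt 5)); [|exact Hinv].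
    change (mc g / sqrt 5 = mc g' / sqrt 5).
    now rewrite <- (sigma_z2 g Hg), <- (sigma_z2 g' Hg'), E2. }
  assert (Ed : md g = md g') by now rewrite <- (sigma_z1 g Hg), <- (sigma_z1 g' Hg'), E1.
  unfold z1 in E1. destruct g, g'; simpl in *; congruence.
Qed.

Lemma not_in_S_entries (g : mat) :
  ~ in_S g -> ma g <> 0 /\ mb g <> 0 /\ mc g <> 0 /\ md g <> 0.
Proof.
  intros HS. assert (Hs : ma g * mb g * mc g * md g <> 0) by (intros H; apply HS; now left).
  repeat split; intros E; apply Hs; rewrite E; ring.
Qed.

Lemma posb_spec (x : R) : x <> 0 -> (x < 0 /\ posb x = false) \/ (0 < x /\ posb x = true).
Proof.
  intros H. unfold posb. destruct (Rlt_dec 0 x); [right|left]; split; auto.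
  destruct (Rdichotomy _ _ H); lra.
Qed.

Ltac sign_cases x :=
  let Hx := fresh in let E := fresh in
  destruct (posb_spec x) as [[Hx E]|[Hx E]]; [nra| |]; rewrite ?E.

Lemma delta_sum_even (g : mat) :
  0 < ma g * md g -> 0 < mb g * mc g -> Z.even (delta1 g + delta2 g) = true.
Proof.
  intros. unfold delta1, delta2, delta12.
  sign_cases (ma g); sign_cases (mb g); sign_cases (mc g); sign_cases (md g);
    reflexivity || nra.
Qed.

Lemma delta_sum_odd (g : mat) :
  ma g * md g < 0 -> mb g * mc g < 0 -> Z.odd (delta1 g + delta2 g) = true.
Proof.
  intros. unfold delta1, delta2, delta12.
  sign_cases (ma g); sign_cases (mb g); sign_cases (mc g); sign_cases (md g);
    reflexivity || nra.
Qed.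

Lemma Gamma_norms_delta (g : mat) : inGamma g -> ~ in_S g ->
  Nm (z1 g) <> 0 /\ Nm (z2 g) <> 0 /\ 0 < Nm (z1 g) * Nm (z2 g) /\
  Nm (z1 g) = 5 * Nm (z2 g) + 1 /\
  exists n : Z, Nm (z2 g) = IZR n /\
    (Z.even (delta1 g + delta2 g) = true -> (0 <= n)%Z /\ delta g = 20 * IZR n + 2) /\
    (Z.odd (delta1 g + delta2 g) = true -> (n <= 0)%Z /\ delta g = - 20 * IZR n - 2).
Proof.
  intros Hg HS. destruct (not_in_S_entries g HS) as (_ & Hb & Hc & _).
  destruct (Nm_z2_IZR g Hg) as [n En].
  pose proof (Nm_z1_eq g Hg) as E1. pose proof (Nm_z1 g Hg) as Ead.
  pose proof (Nm_z2 g Hg) as Ebc. pose proof (delta_Nm_z2 g Hg) as Edelta.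
  rewrite En in *.
  assert (Hbc : mb g * mc g <> 0) by (apply Rmult_integral_contrapositive; tauto).
  assert (Hn : (n <= -1 \/ 1 <= n)%Z) by (destruct (Z.eq_dec n 0) as [->|]; [lra|lia]).
  destruct Hn as [Hn|Hn]; apply IZR_le in Hn;
    (repeat split; [lra|lra|nra|lra|]); exists n; (split; [reflexivity|]).
  - pose proof (delta_sum_odd g ltac:(nra) ltac:(nra)) as Hodd.
    rewrite Zodd_even_bool in Hodd. split.
    + intros Hev. now rewrite Hev in Hodd.
    + intros _. split; [apply le_IZR; lra|]. rewrite Edelta, Rabs_left; lra.
  - split; [|intros Hodd; now rewrite Zodd_even_bool, delta_sum_even in Hodd by nra].
    intros _. split; [apply le_IZR; lra|]. rewrite Edelta, Rabs_right; lra.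
Qed.

Lemma eps_gt_1 : 1 < eps.
Proof. unfold eps. pose proof (sqrt_lt_R0 2 ltac:(lra)). lra. Qed.

Lemma mpow_diag (p q : R) (n : nat) : mpow (Mat p 0 0 q) n = Mat (p ^ n) 0 0 (q ^ n).
Proof.
  induction n as [|n IH]; simpl; [reflexivity|].
  rewrite IH. unfold mmul; simpl. f_equal; ring.
Qed.

Lemma mpowZ_h0 (j : Z) : mpowZ h0 j = Mat (powerRZ eps (2 * j)) 0 0 (powerRZ eps (- (2 * j))).
Proof.
  destruct j as [|p|p]; simpl; [reflexivity| |];
    unfold h0, minv; simpl; rewrite ?Ropp_0, mpow_diag, Pos2Nat.inj_xO, pow_mult, pow_inv;
    reflexivity.
Qed.

Lemma z_h0_mul (g : mat) (j1 j2 : Z) :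
  z1 (mmul (mpowZ h0 j1) (mmul g (mpowZ h0 j2))) = powerRZ eps (2 * (j1 + j2)) * z1 g /\
  z2 (mmul (mpowZ h0 j1) (mmul g (mpowZ h0 j2))) = powerRZ eps (2 * (j1 - j2)) * z2 g.
Proof.
  pose proof eps_gt_1. rewrite !mpowZ_h0. unfold z1, z2, mmul; cbn [ma mb mc md].
  rewrite Z.mul_add_distr_l, Z.mul_sub_distr_l, <- Z.add_opp_r, !powerRZ_add by lra.
  split; unfold Rdiv; ring.
Qed.

Lemma cis_add (A B : R) : Cmult (cis A) (cis B) = cis (A + B).
Proof. unfold Cmult, cis; simpl. rewrite cos_plus, sin_plus. f_equal; ring. Qed.

Lemma cis_sub (A B : R) : Cdiv (cis A) (cis B) = cis (A - B).
Proof.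
  unfold Cdiv, Cmult, Cinv, cis; simpl.
  assert (H : cos B * (cos B * 1) + sin B * (sin B * 1) = 1).
  { pose proof (sin2_cos2 B). unfold Rsqr in H. lra. }
  rewrite H, cos_minus, sin_minus. f_equal; field.
Qed.

Lemma ln_sqrt (x : R) : 0 < x -> ln (sqrt x) = ln x / 2.
Proof.
  intros H. pose proof (sqrt_lt_R0 x H).
  rewrite <- (sqrt_sqrt x) at 2 by lra. rewrite ln_mult by lra. field.
Qed.

Lemma Rabs_div_pos (x y : R) : x <> 0 -> y <> 0 -> 0 < Rabs (x / y).
Proof.
  intros. apply Rabs_pos_lt. unfold Rdiv.
  apply Rmult_integral_contrapositive. split; auto with real.
Qed.

Section Logarithms.

Variable g : mat.
Hypotheses (Ha : ma g <> 0) (Hb : mb g <> 0) (Hc : mc g <> 0) (Hd : md g <> 0).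

Lemma ln_y1 : ln (y1 g) = (ln (Rabs (ma g / md g)) + ln (Rabs (mb g / mc g))) / 2.
Proof.
  unfold y1.
  replace (Rabs (ma g * mb g / (mc g * md g))) with (Rabs (ma g / md g) * Rabs (mb g / mc g))
    by (rewrite <- Rabs_mult; f_equal; field; auto).
  rewrite ln_sqrt, ln_mult by (try apply Rmult_lt_0_compat; apply Rabs_div_pos; auto).
  reflexivity.
Qed.

Lemma ln_y2 : ln (y2 g) = (ln (Rabs (ma g / md g)) - ln (Rabs (mb g / mc g))) / 2.
Proof.
  unfold y2.
  replace (Rabs (ma g * mc g / (mb g * md g))) with (Rabs (ma g / md g) / Rabs (mb g / mc g))
    by (rewrite <- Rabs_div
          by (unfold Rdiv; apply Rmult_integral_contrapositive; split; auto with real);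
        f_equal; field; auto).
  rewrite ln_sqrt, ln_div by (try apply Rdiv_lt_0_compat; apply Rabs_div_pos; auto).
  reflexivity.
Qed.

End Logarithms.

Lemma lam_z1 (g : mat) : inGamma g ->
  lam (z1 g) = cis (PI / (4 * ln eps) * ln (Rabs (ma g / md g))).
Proof. intros Hg. unfold lam. now rewrite sigma_z1. Qed.

Lemma lam_z2 (g : mat) : inGamma g -> mc g <> 0 ->
  lam (z2 g) = cis (PI / (4 * ln eps) * ln (Rabs (mb g / mc g))).
Proof.
  intros Hg Hc. pose proof sqrt5_pos. unfold lam. rewrite sigma_z2 by exact Hg.
  unfold z2. do 4 f_equal. field. lra.
Qed.

Lemma e_half_div_ln_eps4 (t : R) : e (t / 2 / ln (eps ^ 4)) = cis (PI / (4 * ln eps) * t).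
Proof.
  assert (Hl : 0 < ln eps) by (rewrite <- ln_1; apply ln_increasing; pose proof eps_gt_1; lra).
  unfold e. rewrite ln_pow by (pose proof eps_gt_1; lra).
  f_equal. simpl. field. lra.
Qed.

Lemma e_ln_y (g : mat) : inGamma g -> ~ in_S g ->
  e (ln (y1 g) / ln (eps ^ 4)) = Cmult (lam (z1 g)) (lam (z2 g)) /\
  e (ln (y2 g) / ln (eps ^ 4)) = Cdiv (lam (z1 g)) (lam (z2 g)).
Proof.
  intros Hg HS. destruct (not_in_S_entries g HS) as (Ha & Hb & Hc & Hd).
  rewrite ln_y1, ln_y2, !e_half_div_ln_eps4, lam_z1, lam_z2, cis_add, cis_sub by assumption.
  split; f_equal; ring.
Qed.

Theorem proposition4p10 :
  (* (1) injectivity of gamma |-> (z1 gamma, z2 gamma) on Gamma *)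
  (forall g g' : mat, inGamma g -> inGamma g' ->
     z1 g = z1 g' -> z2 g = z2 g' -> g = g') /\
  (* (2) *)
  (forall g : mat, inGamma g -> ~ in_S g ->
     Nm (z1 g) <> 0 /\ Nm (z2 g) <> 0 /\ 0 < Nm (z1 g) * Nm (z2 g) /\
     Nm (z1 g) = 5 * Nm (z2 g) + 1 /\
     exists n : Z, Nm (z2 g) = IZR n /\
       (Z.even (delta1 g + delta2 g) = true ->
          (0 <= n)%Z /\ delta g = 20 * IZR n + 2) /\
       (Z.odd (delta1 g + delta2 g) = true ->
          (n <= 0)%Z /\ delta g = - 20 * IZR n - 2)) /\
  (* (3) *)
  (forall (g : mat) (j1 j2 : Z), inGamma g ->
     z1 (mmul (mpowZ h0 j1) (mmul g (mpowZ h0 j2))) = powerRZ eps (2 * (j1 + j2)) * z1 g /\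
     z2 (mmul (mpowZ h0 j1) (mmul g (mpowZ h0 j2))) = powerRZ eps (2 * (j1 - j2)) * z2 g) /\
  (* (4) *)
  (forall g : mat, inGamma g -> ~ in_S g ->
     e (ln (y1 g) / ln (eps ^ 4)) = Cmult (lam (z1 g)) (lam (z2 g)) /\
     e (ln (y2 g) / ln (eps ^ 4)) = Cdiv (lam (z1 g)) (lam (z2 g))).
Proof.
  split; [exact Gamma_z_inj|].
  split; [exact Gamma_norms_delta|].
  split; [intros g j1 j2 _; apply z_h0_mul|].
  exact e_ln_y.
Qed.
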